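(* Let $d\ge2$ be an integer, $D_1,\dots,D_d$ real constants, $D=\sum_iD_i$, and let $m:[-D^2/d,\pi^2/d)\to[0,\infty)$ be defined by (with $\mu=-\lambda$ for $\lambda<0$) $$m(\lambda)=\begin{cases}0 & \text{if } \lambda=-D^2/d<0,\\[2pt] \left|\ln\left(\dfrac{\big(\frac{e^{\sqrt{d\mu}}}{\sqrt{-C_-}}+1\big)\big(-\frac{1}{\sqrt{-C_-}}+1\big)}{\big(1-\frac{e^{\sqrt{d\mu}}}{\sqrt{-C_-}}\big)\big(1+\frac{1}{\sqrt{-C_-}}\big)}\right)\right| & \text{if } -D^2/d<\lambda<0,\\[2pt] |D| & \text{if } \lambda=0,\\[2pt] \left|\ln\dfrac{\tan(C_++\sqrt{d\lambda})+\sec(C_++\sqrt{d\lambda})}{\tan(C_+)+\sec(C_+)}\right| & \text{if } 0<\lambda<\pi^2/d,\end{cases}$$ where $C_-=\dfrac{e^{2\sqrt{d\mu}}-e^{D+\sqrt{d\mu}}}{e^{D+\sqrt{d\mu}}-1}$ and $C_+=\arctan\left(\dfrac{\cos(\sqrt{d\lambda})-e^D}{\sin(\sqrt{d\lambda})}\right)$. Then $m$ is surjective onto $[0,\infty)$.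
   Context: For $-D^2/d<\lambda<0$ one has $C_-<0$, so $\sqrt{-C_-}$ is defined. *)

From Stdlib Require Import Reals.
Open Scope R_scope.

Definition Dsum (d : nat) (Dv : nat -> R) : R := sum_f_R0 Dv (pred d).

Definition Cminus (d : nat) (D mu : R) : R :=
  (exp (2 * sqrt (INR d * mu)) - exp (D + sqrt (INR d * mu)))
  / (exp (D + sqrt (INR d * mu)) - 1).

Definition Cplus (d : nat) (D lam : R) : R :=
  atan ((cos (sqrt (INR d * lam)) - exp D) / sin (sqrt (INR d * lam))).

Definition sec (x : R) : R := 1 / cos x.

(* The function m on [-D^2/d, pi^2/d) (values outside the domain irrelevant). *)
Definition m_fun (d : nat) (D lam : R) : R :=
  if Rlt_dec lam 0 then
    if Req_EM_T lam (- D ^ 2 / INR d) then 0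
    else
      let mu := - lam in
      let s := sqrt (- Cminus d D mu) in
      let a := exp (sqrt (INR d * mu)) / s in
      let b := 1 / s in
      Rabs (ln (((a + 1) * (- b + 1)) / ((1 - a) * (1 + b))))
  else if Req_EM_T lam 0 then Rabs D
  else
    let c := Cplus d D lam in
    let t := sqrt (INR d * lam) in
    Rabs (ln ((tan (c + t) + sec (c + t)) / (tan c + sec c))).

From Stdlib Require Import Reals Lra Lia Psatz.
Open Scope R_scope.

(* Write E = exp D.  On both open branches m equals |ln ((1 + E + Q) / (1 + E - Q))|
   with Q > 0 given by a law of cosines: Q^2 = 1 + E^2 - 2 E cos t for lam = t^2/d > 0,
   and Q^2 = 1 + E^2 - 2 E cosh s for lam = -s^2/d < 0.  This log-ratio is a bijection
   from Q in (0, 1 + E) onto (0, +oo) sending |1 - E| to |D| = m 0; angles t in (0, pi)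
   reach every Q in (|1 - E|, 1 + E), and s in (0, |D|) every Q in (0, |1 - E|).
   Finally m (-D^2/d) = 0. *)

Definition logratio (a q : R) : R := Rabs (ln ((a + q) / (a - q))).

Definition logratio_inv (a y : R) : R := a * ((exp y - 1) / (exp y + 1)).

Lemma logratio_opp (a q : R) : - a < q < a -> logratio a (- q) = logratio a q.
Proof.
  intros Hq; unfold logratio.
  replace ((a + - q) / (a - - q)) with (/ ((a + q) / (a - q))) by (field; lra).
  rewrite ln_Rinv, Rabs_Ropp; [reflexivity|].
  apply Rdiv_lt_0_compat; lra.
Qed.

Lemma logratio_invK (a y : R) : 0 < a -> 0 <= y -> logratio a (logratio_inv a y) = y.
Proof.
  intros Ha Hy; unfold logratio, logratio_inv.
  assert (Hey : 0 < exp y) by apply exp_pos.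
  replace ((a + a * ((exp y - 1) / (exp y + 1))) / (a - a * ((exp y - 1) / (exp y + 1))))
    with (exp y) by (field; lra).
  rewrite ln_exp; apply Rabs_pos_eq, Hy.
Qed.

Lemma logratio_inv_bounds (a y : R) : 0 < a -> 0 < y -> 0 < logratio_inv a y < a.
Proof.
  intros Ha Hy; unfold logratio_inv.
  assert (Hey : 1 < exp y) by (rewrite <- exp_0; apply exp_increasing, Hy).
  assert (Hr : 0 < (exp y - 1) / (exp y + 1)) by (apply Rdiv_lt_0_compat; lra).
  assert (Hr1 : 1 - (exp y - 1) / (exp y + 1) = 2 / (exp y + 1)) by (field; lra).
  assert (0 < 2 / (exp y + 1)) by (apply Rdiv_lt_0_compat; lra).
  nra.
Qed.

Lemma logratio_inv_lt (a y z : R) : 0 < a -> y < z -> logratio_inv a y < logratio_inv a z.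
Proof.
  intros Ha Hyz; unfold logratio_inv.
  assert (Hy : 0 < exp y) by apply exp_pos.
  assert (Hlt : exp y < exp z) by (apply exp_increasing, Hyz).
  assert (Hdiff : a * ((exp z - 1) / (exp z + 1)) - a * ((exp y - 1) / (exp y + 1))
                  = 2 * a * (exp z - exp y) / ((exp y + 1) * (exp z + 1))) by (field; lra).
  assert (0 < 2 * a * (exp z - exp y) / ((exp y + 1) * (exp z + 1)))
    by (apply Rdiv_lt_0_compat; nra).
  lra.
Qed.

Lemma logratio_inv_Rabs (D : R) : logratio_inv (1 + exp D) (Rabs D) = Rabs (1 - exp D).
Proof.
  unfold logratio_inv; assert (HE : 0 < exp D) by apply exp_pos.
  destruct (Rle_or_lt 0 D) as [HD|HD].
  - assert (1 <= exp D) by (pose proof (exp_ineq1_le D); lra).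
    rewrite Rabs_pos_eq, Rabs_left1 by lra; field; lra.
  - assert (exp D < 1) by (rewrite <- exp_0; apply exp_increasing, HD).
    rewrite Rabs_left, exp_Ropp, Rabs_pos_eq by lra; field; lra.
Qed.

Lemma cosh_exp (x : R) : cosh x = (exp x + / exp x) / 2.
Proof. unfold cosh; rewrite exp_Ropp; reflexivity. Qed.

Lemma cosh_Rabs (x : R) : cosh (Rabs x) = cosh x.
Proof.
  destruct (Rle_or_lt 0 x) as [Hx|Hx]; [now rewrite Rabs_pos_eq|].
  rewrite Rabs_left by exact Hx; unfold cosh; rewrite Ropp_involutive; lra.
Qed.

Lemma cosh_le (u v : R) : 0 <= u <= v -> cosh u <= cosh v.
Proof.
  intros Huv; rewrite !cosh_exp.
  assert (Hp : 1 <= exp u) by (pose proof (exp_ineq1_le u); lra).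
  assert (Hpq : exp u <= exp v).
  { destruct (proj2 Huv) as [H|H]; [left; apply exp_increasing, H|now rewrite H]. }
  assert (Hd : exp v + / exp v - (exp u + / exp u)
               = (exp v - exp u) * (exp u * exp v - 1) / (exp u * exp v)) by (field; lra).
  assert (0 <= (exp v - exp u) * (exp u * exp v - 1) / (exp u * exp v)).
  { apply Rmult_le_pos; [apply Rmult_le_pos; nra|left; apply Rinv_0_lt_compat; nra]. }
  lra.
Qed.

Lemma exists_cosh_eq (a c : R) : 0 <= a -> 1 < c < cosh a ->
  exists s, 0 < s < a /\ cosh s = c.
Proof.
  intros Ha Hc.
  set (r := sqrt (c * c - 1)).
  assert (Hr : 0 <= r) by apply sqrt_pos.
  assert (Hrr : r * r = c * c - 1) by (apply sqrt_sqrt; nra).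
  assert (Hx : exp (ln (c + r)) = c + r) by (apply exp_ln; lra).
  exists (ln (c + r)); split; [split|].
  - rewrite <- ln_1; apply ln_increasing; lra.
  - destruct (Rlt_or_le (ln (c + r)) a) as [H|H]; [exact H|].
    enough (cosh a <= c) by lra.
    assert (Hcosh : cosh (ln (c + r)) = c) by (rewrite cosh_exp, Hx; field_simplify_eq; nra).
    rewrite <- Hcosh; apply cosh_le; lra.
  - rewrite cosh_exp, Hx; field_simplify_eq; nra.
Qed.

Lemma exp_mul_cosh (D : R) : 2 * exp D * cosh D = 1 + exp D * exp D.
Proof. rewrite cosh_exp; field; apply Rgt_not_eq, exp_pos. Qed.

Lemma sqrt_mul_div_sq (n v : R) : 0 < n -> 0 <= v -> sqrt (n * (v * v / n)) = v.
Proof.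
  intros Hn Hv; replace (n * (v * v / n)) with (v * v) by (field; lra).
  apply sqrt_square, Hv.
Qed.

Lemma tan_plus_sec (x : R) : cos x <> 0 -> tan x + sec x = (1 + sin x) / cos x.
Proof. intros Hx; unfold tan, sec; field; exact Hx. Qed.

Lemma sq_div_lt (n u v : R) : 0 < n -> 0 <= u < v -> u * u / n < v ^ 2 / n.
Proof.
  intros Hn Huv; apply Rmult_lt_compat_r; [apply Rinv_0_lt_compat, Hn|nra].
Qed.

Lemma m_fun_0 (d : nat) (D : R) : m_fun d D 0 = Rabs D.
Proof.
  unfold m_fun; destruct (Rlt_dec 0 0) as [H|_]; [lra|].
  destruct (Req_EM_T 0 0) as [_|H]; [reflexivity|easy].
Qed.

Lemma m_fun_lower_end (d : nat) (D : R) : (0 < d)%nat -> D <> 0 ->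
  m_fun d D (- D ^ 2 / INR d) = 0.
Proof.
  intros Hd HD; unfold m_fun.
  assert (HD2 : 0 < D ^ 2) by (rewrite <- Rsqr_pow2; apply Rsqr_pos_lt, HD).
  assert (Hneg : - D ^ 2 / INR d < 0).
  { assert (0 < D ^ 2 / INR d) by (apply Rdiv_lt_0_compat; [exact HD2|apply lt_0_INR, Hd]).
    unfold Rdiv in *; lra. }
  destruct (Rlt_dec (- D ^ 2 / INR d) 0) as [_|H]; [|contradiction].
  destruct (Req_EM_T (- D ^ 2 / INR d) (- D ^ 2 / INR d)) as [_|H]; [reflexivity|easy].
Qed.

Lemma m_domain_pos (d : nat) (D t : R) : (0 < d)%nat -> 0 < t < PI ->
  - D ^ 2 / INR d <= t * t / INR d < PI ^ 2 / INR d.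
Proof.
  intros Hd Ht; assert (Hn : 0 < INR d) by (apply lt_0_INR, Hd).
  assert (0 <= D ^ 2 / INR d) by (apply Rle_mult_inv_pos; [apply pow2_ge_0|exact Hn]).
  assert (0 < t * t / INR d) by (apply Rdiv_lt_0_compat; nra).
  split; [unfold Rdiv in *; lra|apply sq_div_lt; lra].
Qed.

Lemma m_domain_neg (d : nat) (D s : R) : (0 < d)%nat -> 0 < s < Rabs D ->
  - D ^ 2 / INR d < - (s * s / INR d) < 0.
Proof.
  intros Hd Hs; assert (Hn : 0 < INR d) by (apply lt_0_INR, Hd).
  assert (H := sq_div_lt (INR d) s (Rabs D) Hn ltac:(lra)); rewrite pow2_abs in H.
  assert (0 < s * s / INR d) by (apply Rdiv_lt_0_compat; nra).
  unfold Rdiv in *; lra.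
Qed.

Lemma m_fun_pos (d : nat) (D t Q : R) : (0 < d)%nat -> 0 < t < PI -> 0 < Q ->
  Q * Q = 1 + exp D * exp D - 2 * exp D * cos t ->
  m_fun d D (t * t / INR d) = logratio (1 + exp D) Q.
Proof.
  intros Hd Ht HQ HQQ.
  assert (Hn : 0 < INR d) by (apply lt_0_INR, Hd).
  assert (Hlam : 0 < t * t / INR d) by (apply Rdiv_lt_0_compat; nra).
  unfold m_fun.
  destruct (Rlt_dec (t * t / INR d) 0) as [H|_]; [lra|].
  destruct (Req_EM_T (t * t / INR d) 0) as [H|_]; [lra|].
  cbv zeta; unfold Cplus; rewrite sqrt_mul_div_sq by lra.
  set (E := exp D) in *; assert (HE : 0 < E) by apply exp_pos.
  set (C := cos t) in *; set (S := sin t).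
  assert (HS : 0 < S) by (apply sin_gt_0; lra).
  assert (HSC : S * S + C * C = 1)
    by (pose proof (sin2_cos2 t) as H; unfold Rsqr in H; exact H).
  assert (HC : -1 < C < 1) by (split; nra).
  assert (HQE : 1 - E < Q /\ E - 1 < Q /\ Q < 1 + E) by (repeat split; nra).
  assert (HCEQ : 0 < C - E + Q) by nra.
  set (c := atan ((C - E) / S)).
  assert (Hnorm : sqrt (1 + ((C - E) / S)²) = Q / S).
  { replace (1 + ((C - E) / S)²) with ((Q / S) * (Q / S))
      by (unfold Rsqr; field_simplify_eq; nra).
    apply sqrt_square, Rlt_le, Rdiv_lt_0_compat; lra. }
  assert (Hcos : cos c = S / Q) by (unfold c; rewrite cos_atan, Hnorm; field; lra).
  assert (Hsin : sin c = (C - E) / Q) by (unfold c; rewrite sin_atan, Hnorm; field; lra).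
  assert (Hcos' : cos (c + t) = E * S / Q)
    by (rewrite cos_plus, Hcos, Hsin; fold C S; field; lra).
  assert (Hsin' : sin (c + t) = (1 - E * C) / Q)
    by (rewrite sin_plus, Hcos, Hsin; fold C S; field_simplify_eq; nra).
  assert (Hcos_nz : cos c <> 0) by (rewrite Hcos; apply Rgt_not_eq, Rdiv_lt_0_compat; lra).
  assert (Hcos'_nz : cos (c + t) <> 0)
    by (rewrite Hcos'; apply Rgt_not_eq, Rdiv_lt_0_compat; nra).
  rewrite !tan_plus_sec, Hcos, Hsin, Hcos', Hsin' by assumption.
  unfold logratio; f_equal; f_equal.
  field_simplify_eq; [nra|repeat split; lra].
Qed.

Lemma neg_branch_ratio (x E k : R) : 0 < x -> 0 < k -> k <> x ->
  k * k * (E * x - 1) = x * (E - x) -> 1 + E + k * (E * x - 1) / x <> 0 ->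
  (x / k + 1) * (- (1 / k) + 1) / ((1 - x / k) * (1 + 1 / k))
  = (1 + E - k * (E * x - 1) / x) / (1 + E + k * (E * x - 1) / x).
Proof.
  intros Hx Hk Hkx Hrel HP.
  assert (HP' : (1 + E) * x + k * (E * x - 1) <> 0).
  { replace ((1 + E) * x + k * (E * x - 1)) with (x * (1 + E + k * (E * x - 1) / x))
      by (field; lra).
    apply Rmult_integral_contrapositive; split; lra. }
  field_simplify_eq; [|repeat split; lra].
  enough (k * (k * k * (E * x - 1) - x * (E - x)) = 0) by lra.
  rewrite Hrel; ring.
Qed.

Lemma neg_branch_logratio (E x Q : R) : 0 < E -> 1 < x -> 0 < Q < 1 + E ->
  x * (Q * Q) = (E - x) * (E * x - 1) ->
  let k := sqrt (- ((x * x - E * x) / (E * x - 1))) in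
  Rabs (ln ((x / k + 1) * (- (1 / k) + 1) / ((1 - x / k) * (1 + 1 / k))))
  = logratio (1 + E) Q.
Proof.
  intros HE Hx HQ Hrel k.
  set (u := E * x - 1) in *.
  assert (Hu : u <> 0) by (intro H; rewrite H in Hrel; nra).
  (* [k = x Q / |u|], so [P] below is [Q] up to sign. *)
  assert (Hk_def : k = Rabs (x * Q / u)).
  { unfold k; rewrite <- sqrt_Rsqr_abs; f_equal.
    unfold Rsqr; field_simplify_eq; [nra|exact Hu]. }
  assert (Hk : 0 < k).
  { rewrite Hk_def; apply Rabs_pos_lt; unfold Rdiv; apply Rmult_integral_contrapositive.
    split; [nra|apply Rinv_neq_0_compat, Hu]. }
  assert (Hk2 : k * k * u = x * (E - x)).
  { replace (k * k) with ((x * Q / u) * (x * Q / u))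
      by (rewrite Hk_def, <- Rabs_mult; symmetry; apply Rabs_pos_eq; nra).
    replace (x * Q / u * (x * Q / u) * u) with (x * (x * (Q * Q)) / u) by (field; exact Hu).
    rewrite Hrel; field; exact Hu. }
  set (P := k * u / x).
  assert (HPP : P * P = Q * Q).
  { replace (P * P) with (k * k * u * u / (x * x)) by (unfold P; field; lra).
    rewrite Hk2; apply (Rmult_eq_reg_l x); [|lra].
    rewrite Hrel; field; lra. }
  assert (HPQ : P = Q \/ P = - Q).
  { assert (H : (P - Q) * (P + Q) = 0) by nra.
    apply Rmult_integral in H; lra. }
  assert (Hkx : k <> x).
  { intro H; assert (HPu : P = u) by (unfold P; rewrite H; field; lra).
    assert (Hxu : x * u = E - x).
    { apply (Rmult_eq_reg_r u); [|exact Hu].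
      rewrite <- Hrel, <- HPP, HPu; ring. }
    assert (Hx2 : E * ((x - 1) * (x + 1)) = 0) by (unfold u in Hxu; lra).
    assert (0 < E * ((x - 1) * (x + 1))) by (apply Rmult_lt_0_compat; nra).
    lra. }
  assert (HP : 1 + E + P <> 0) by (destruct HPQ as [-> | ->]; lra).
  rewrite (neg_branch_ratio x E k) by (fold u; fold P; lra).
  fold u P.
  destruct HPQ as [-> | ->].
  - rewrite <- (logratio_opp (1 + E) Q) by lra; unfold logratio.
    do 3 f_equal; ring.
  - unfold logratio; do 3 f_equal; ring.
Qed.

Lemma m_fun_neg (d : nat) (D s Q : R) : (0 < d)%nat -> 0 < s < Rabs D -> 0 < Q < 1 + exp D ->
  Q * Q = 1 + exp D * exp D - 2 * exp D * cosh s ->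
  m_fun d D (- (s * s / INR d)) = logratio (1 + exp D) Q.
Proof.
  intros Hd Hs HQ HQQ.
  destruct (m_domain_neg d D s Hd Hs) as [Hmin Hneg].
  unfold m_fun.
  destruct (Rlt_dec (- (s * s / INR d)) 0) as [_|H]; [|lra].
  destruct (Req_EM_T (- (s * s / INR d)) (- D ^ 2 / INR d)) as [H|_]; [lra|].
  cbv zeta; unfold Cminus.
  rewrite Ropp_involutive, sqrt_mul_div_sq by (first [apply lt_0_INR, Hd | lra]).
  replace (2 * s) with (s + s) by ring; rewrite !exp_plus.
  apply neg_branch_logratio; [apply exp_pos| |exact HQ|].
  - rewrite <- exp_0; apply exp_increasing; lra.
  - rewrite HQQ, cosh_exp; field; apply Rgt_not_eq, exp_pos.
Qed.

Lemma m_fun_surj_above (d : nat) (D y : R) : (0 < d)%nat -> Rabs D < y ->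
  exists lam, - D ^ 2 / INR d <= lam < PI ^ 2 / INR d /\ m_fun d D lam = y.
Proof.
  intros Hd Hy.
  set (E := exp D); assert (HE : 0 < E) by apply exp_pos.
  set (Q := logratio_inv (1 + E) y).
  assert (HQ : 0 < Q < 1 + E) by (apply logratio_inv_bounds; pose proof (Rabs_pos D); lra).
  assert (HQ1 : Rabs (1 - E) < Q)
    by (pose proof (logratio_inv_Rabs D) as HR; fold E in HR;
        rewrite <- HR; apply logratio_inv_lt; lra).
  apply Rabs_def2 in HQ1.
  set (c := (1 + E * E - Q * Q) / (2 * E)).
  assert (Hc : 2 * E * c = 1 + E * E - Q * Q) by (unfold c; field; lra).
  assert (Hc1 : -1 < c < 1) by (split; nra).
  set (t := acos c).
  assert (Ht : 0 < t < PI) by (apply acos_bound_lt, Hc1).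
  assert (Hct : cos t = c) by (apply cos_acos; lra).
  exists (t * t / INR d); split; [apply m_domain_pos; assumption|].
  rewrite (m_fun_pos d D t Q) by (first [assumption | fold E; rewrite Hct; lra | lra]).
  apply logratio_invK; pose proof (Rabs_pos D); lra.
Qed.

Lemma m_fun_surj_below (d : nat) (D y : R) : (0 < d)%nat -> 0 < y < Rabs D ->
  exists lam, - D ^ 2 / INR d <= lam < PI ^ 2 / INR d /\ m_fun d D lam = y.
Proof.
  intros Hd Hy.
  set (E := exp D); assert (HE : 0 < E) by apply exp_pos.
  set (Q := logratio_inv (1 + E) y).
  assert (HQ : 0 < Q < 1 + E) by (apply logratio_inv_bounds; lra).
  assert (HQ1 : Q < Rabs (1 - E))
    by (pose proof (logratio_inv_Rabs D) as HR; fold E in HR;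
        rewrite <- HR; apply logratio_inv_lt; lra).
  assert (HQ1' : Q * Q < (1 - E) * (1 - E)).
  { pose proof (Rsqr_abs (1 - E)) as HR; unfold Rsqr in HR; nra. }
  set (c := (1 + E * E - Q * Q) / (2 * E)).
  assert (Hc : 2 * E * c = 1 + E * E - Q * Q) by (unfold c; field; lra).
  assert (Hc1 : 1 < c < cosh (Rabs D)).
  { rewrite cosh_Rabs; pose proof (exp_mul_cosh D) as HD; fold E in HD; split; nra. }
  destruct (exists_cosh_eq (Rabs D) c (Rabs_pos D) Hc1) as [s [Hs Hcs]].
  exists (- (s * s / INR d)); split.
  - pose proof (m_domain_neg d D s Hd Hs).
    assert (0 <= PI ^ 2 / INR d)
      by (apply Rle_mult_inv_pos; [apply pow2_ge_0|apply lt_0_INR, Hd]).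
    lra.
  - rewrite (m_fun_neg d D s Q) by (first [assumption | fold E; rewrite Hcs; lra | lra]).
    apply logratio_invK; lra.
Qed.

Theorem m_fun_surjective (d : nat) (D y : R) : (0 < d)%nat -> 0 <= y ->
  exists lam, - D ^ 2 / INR d <= lam < PI ^ 2 / INR d /\ m_fun d D lam = y.
Proof.
  intros Hd Hy.
  assert (Hmin : - D ^ 2 / INR d <= 0).
  { assert (0 <= D ^ 2 / INR d)
      by (apply Rle_mult_inv_pos; [apply pow2_ge_0|apply lt_0_INR, Hd]).
    unfold Rdiv in *; lra. }
  assert (Hmax : 0 < PI ^ 2 / INR d)
    by (apply Rdiv_lt_0_compat; [apply pow_lt, PI_RGT_0|apply lt_0_INR, Hd]).
  destruct (Rtotal_order y (Rabs D)) as [Hlt|[Heq|Hgt]].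
  - destruct (Req_dec y 0) as [Hy0|Hy0]; [|apply m_fun_surj_below; [exact Hd|lra]].
    assert (HD : D <> 0) by (intro H; rewrite H, Rabs_R0 in Hlt; lra).
    exists (- D ^ 2 / INR d); split; [lra|].
    rewrite Hy0; apply m_fun_lower_end; assumption.
  - exists 0; split; [lra|].
    rewrite Heq; apply m_fun_0.
  - apply m_fun_surj_above; assumption.
Qed.

Theorem lemma3p5 (d : nat) (Dv : nat -> R) :
  (2 <= d)%nat ->
  forall y : R, 0 <= y ->
  exists lam : R,
    - (Dsum d Dv) ^ 2 / INR d <= lam < PI ^ 2 / INR d /\
    m_fun d (Dsum d Dv) lam = y.
Proof.
  intros Hd y Hy; apply m_fun_surjective; [lia|exact Hy].
Qed.
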